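(* For any regulatory network $\mathbf{RN}$, the geometric parameter graph $\mathsf{GPG}$ is connected.
   Context: Regulatory network: $\mathbf{RN}=(V,E)$, $V=\{1,\dots,N\}$. Each edge is an ordered pair $(i,j)$ annotated as an activation $i\to j$ or a repression $i\dashv j$. There is at most one edge per ordered pair, and there is no $i\dashv i$. Set $\mathbf S(n)=\{i:(i,n)\in E\}$ and $\mathbf T(n)=\{j:(n,j)\in E\}$. Each node $j$ carries a logical AND/OR expression (no negations) using each variable of $\mathbf S(j)$ exactly once. $M_j$ is the polynomial obtained by AND $\mapsto$ product and OR $\mapsto$ sum. Parameters: $z=(l,u,\theta,\gamma)\in\mathbb R^D$, $D=N+3\#E$, consisting of $l_{j,i},u_{j,i},\theta_{j,i}$ for each edge $(i,j)$ and $\gamma_i$ for each node. Set $\bar Z=\{z\in[0,\infty)^D: l_{j,i}\le u_{j,i}\}$. Switching nonlinearity: $\sigma_{j,i}(x)=l_{j,i}$ if ($i\to j$, $x_i<\theta_{j,i}$) or ($i\dashv j$, $x_i>\theta_{j,i}$). It equals $u_{j,i}$ if ($i\to j$, $x_i>\theta_{j,i}$) or ($i\dashv j$, $x_i<\theta_{j,i}$). Set $\Lambda_j(x)=M_j((\sigma_{j,i}(x))_{i\in\mathbf S(j)})$. Fundamental cells: with $\theta_{-\infty,i}=0$ and $\theta_{\infty,i}=\infty$, a fundamental cell is $\kappa=\prod_i(\theta_{a_i,i},\theta_{b_i,i})$ with consecutive thresholds among $\{\theta_{j,i}:j\in\mathbf T(i)\cup\{\pm\infty\}\}$. $\Lambda(\kappa)$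 is the constant value of $\Lambda$ on $\kappa$. $\theta_{j,i}$ defines a face of $\kappa$ if $j\in\{a_i,b_i\}\cap V$. Regular parameters: $z$ is regular ($z\in Z$) if - $0<l_{j,i}<u_{j,i}$, $\gamma_i>0$ and $\theta_{j,i}>0$; - the thresholds $\theta_{j,i}$, $j\in\mathbf T(i)$, are distinct for each $i$; - $\Lambda_i(\kappa)\neq\gamma_i\theta_{j,i}$ whenever $\theta_{j,i}$ defines a face of $\kappa$. The relevant equalities are - $l_{j,i}=u_{j,i}$, $\gamma_i=0$, $\theta_{j,i}=0$, $l_{j,i}=0$, $u_{j,i}=0$; - $\theta_{j,i}=\theta_{j',i}$ ($j\ne j'\in\mathbf T(i)$); - $\gamma_i\theta_{j,i}=\Lambda_i(\kappa)$ with $\theta_{j,i}$ defining a face of $\kappa$. A point of $\bar Z$ is $1$-deficient if exactly one of these holds. $\mathsf{GPG}$: its vertices are the connected components of $Z$. Two components are adjacent if the intersection of their closures in $\bar Z$ contains a $1$-deficient point. *)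

From HB Require Import structures.
From mathcomp Require Import all_boot all_order all_algebra.
From mathcomp Require Import all_classical all_reals all_analysis.
From Stdlib Require Import Relation_Operators.

Set Implicit Arguments.
Unset Strict Implicit.
Unset Printing Implicit Defensive.

Import Order.TTheory GRing.Theory Num.Theory.
Import numFieldNormedType.Exports.
Local Open Scope classical_set_scope.
Local Open Scope ring_scope.

Inductive lexpr (n : nat) : Type :=
  | LVar of 'I_n
  | LAnd of lexpr n & lexpr n
  | LOr of lexpr n & lexpr n.

Fixpoint leaves n (e : lexpr n) : seq 'I_n :=
  match e with
  | LVar i => [:: i]
  | LAnd a b => leaves a ++ leaves b
  | LOr a b => leaves a ++ leaves b
  end.

Fixpoint meval (R : pzRingType) n (v : 'I_n -> R) (e : lexpr n) : R :=
  match e with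
  | LVar i => v i
  | LAnd a b => meval v a * meval v b
  | LOr a b => meval v a + meval v b
  end.

Section GPG.
Variables (R : realType) (N : nat).
(* sgn i j = Some true  : activation  i -> j
   sgn i j = Some false : repression  i -| j
   sgn i j = None       : (i,j) is not an edge *)
Variable sgn : 'I_N -> 'I_N -> option bool.
(* M j : the logic of node j (None is used only when S(j) is empty) *)
Variable M : 'I_N -> option (lexpr N).

Definition is_edge (i j : 'I_N) : bool := sgn i j != None.

Definition src_set (n : 'I_N) : {set 'I_N} := [set i | is_edge i n].
Definition tgt_set (n : 'I_N) : {set 'I_N} := [set j | is_edge n j].

Definition wf_network : Prop :=
  (forall i, sgn i i <> Some false) /\
  (forall j, match M j with
             | None => src_set j = finset.set0
             | Some e => perm_eq (leaves e) (enum (src_set j)) = true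
             end).

Definition edge := {p : 'I_N * 'I_N | is_edge p.1 p.2}.
Definition esrc (e : edge) : 'I_N := (val e).1.
Definition etgt (e : edge) : 'I_N := (val e).2.
Definition is_act (e : edge) : bool := sgn (esrc e) (etgt e) == Some true.

(* parameter coordinates: gamma_i for each node, and (l,u,theta) for each
   edge; D = N + 3 #E *)
Definition pidx := ('I_N + (edge * 'I_3))%type.
Local Notation param := {ptws pidx -> R}.

(* for an edge e = (i,j):  l e = l_{j,i}, u e = u_{j,i}, th e = theta_{j,i} *)
Definition pl (z : param) (e : edge) : R := z (inr (e, 0%R)).
Definition pu (z : param) (e : edge) : R := z (inr (e, 1%R)).
Definition pth (z : param) (e : edge) : R := z (inr (e, 2%R)).
Definition pg (z : param) (i : 'I_N) : R := z (inl i).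

Definition sig_val (z : param) (e : edge) (above : bool) : R :=
  if above == is_act e then pu z e else pl z e.

(* sigma_{j,i}(x) (meaningful for x_i <> theta_{j,i}) *)
Definition sigma (z : param) (e : edge) (x : 'I_N -> R) : R :=
  sig_val z e (pth z e < x (esrc e)).

Definition edge_of (i j : 'I_N) : option edge := insub (i, j).

Definition pattern (z : param) (n : 'I_N) (x : 'I_N -> R) : {ffun 'I_N -> bool} :=
  [ffun k => if edge_of k n is Some e then pth z e < x k else false].

Definition Lambda_p (z : param) (n : 'I_N) (p : {ffun 'I_N -> bool}) : R :=
  match M n with
  | None => 0
  | Some t => meval (fun k => if edge_of k n is Some e then sig_val z e (p k)
                              else 0) t
  end.

Definition Lambda (z : param) (n : 'I_N) (x : 'I_N -> R) : R :=
  Lambda_p z n (pattern z n x).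

(* x lies in (the interior of) some fundamental cell: x in (0,oo)^N and
   x_k differs from every threshold theta_{j,k} *)
Definition cellpt (z : param) (x : 'I_N -> R) : Prop :=
  (forall k, 0 < x k) /\ (forall e : edge, x (esrc e) <> pth z e).

(* theta_{j,i} (e = (i,j)) defines a face of the fundamental cell containing x:
   it is one of the two consecutive thresholds bounding x_i *)
Definition face (z : param) (e : edge) (x : 'I_N -> R) : Prop :=
  x (esrc e) <> pth z e /\
  forall e' : edge, esrc e' = esrc e ->
    ~ (Num.min (x (esrc e)) (pth z e) < pth z e' <
       Num.max (x (esrc e)) (pth z e)).

Definition Zbar : set param :=
  [set z | (forall e, 0 <= pl z e /\ 0 <= pu z e /\ 0 <= pth z e /\
                      pl z e <= pu z e) /\ (forall i, 0 <= pg z i)].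

Definition Zreg : set param :=
  [set z |
    (forall e, 0 < pl z e /\ pl z e < pu z e /\ 0 < pth z e) /\
    (forall i, 0 < pg z i) /\
    (forall e e' : edge, esrc e = esrc e' -> e <> e' -> pth z e <> pth z e') /\
    (forall (e : edge) x, cellpt z x -> face z e x ->
        Lambda z (esrc e) x <> pg z (esrc e) * pth z e)].

Inductive eq_label : Type :=
  | EqLU of edge
  | EqL0 of edge
  | EqU0 of edge
  | EqTh0 of edge
  | EqG0 of 'I_N
  | EqThTh of edge & edge
  | EqFace of edge & {ffun 'I_N -> bool}.
      (* gamma_i theta_{j,i} = Lambda_i(kappa), theta_{j,i} face of kappa,
         where kappa has sigma-pattern p on S(i) *)

Definition eq_holds (z : param) (a : eq_label) : Prop :=
  match a with
  | EqLU e => pl z e = pu z e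
  | EqL0 e => pl z e = 0
  | EqU0 e => pu z e = 0
  | EqTh0 e => pth z e = 0
  | EqG0 i => pg z i = 0
  | EqThTh e e' => esrc e = esrc e' /\ (etgt e < etgt e')%N /\ pth z e = pth z e'
  | EqFace e p =>
      (exists x, cellpt z x /\ face z e x /\ pattern z (esrc e) x = p) /\
      pg z (esrc e) * pth z e = Lambda_p z (esrc e) p
  end.

Definition one_deficient (z : param) : Prop :=
  Zbar z /\ exists a, eq_holds z a /\ forall b, eq_holds z b -> b = a.

Definition gpg_vertex (C : set param) : Prop :=
  exists2 z, Zreg z & C = connected_component Zreg z.

Definition gpg_adj (C1 C2 : set param) : Prop :=
  gpg_vertex C1 /\ gpg_vertex C2 /\
  exists z, (closure C1 `&` Zbar) z /\ (closure C2 `&` Zbar) z /\ one_deficient z.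

Definition gpg_connected : Prop :=
  forall C1 C2, gpg_vertex C1 -> gpg_vertex C2 -> clos_refl_trans _ gpg_adj C1 C2.

End GPG.

From Pilot Require Import Defs.
From HB Require Import structures.
From mathcomp Require Import all_boot all_order all_algebra.
From mathcomp Require Import all_classical all_reals all_analysis.
From mathcomp Require Import ring lra.
From Stdlib Require Import Relation_Operators.

Set Implicit Arguments.
Unset Strict Implicit.
Unset Printing Implicit Defensive.

Import Order.TTheory GRing.Theory Num.Theory.
Import numFieldNormedType.Exports.
Local Open Scope classical_set_scope.
Local Open Scope ring_scope.

(* Every regular parameter is joined in the GPG to one fixed parameter [zstar]. Moving
   along a straight segment that stays regular except at finitely many 1-deficient
   points only visits adjacent components, so it suffices to connect by such segments.
   A small push of one [l] or [u] makes a point generic: then, when a single gamma_i is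
   moved linearly, the face equalities gamma_i theta = Lambda_i(kappa) are crossed one
   at a time. This lets all gamma be lowered to a value so small that gamma theta <
   Lambda everywhere. In that regime no face equality can hold, so the thresholds can be
   rescaled below 1, moved one at a time to prescribed distinct targets (crossing only
   coincidences theta = theta'), and finally l, u and gamma are moved to the values of
   [zstar] through regular parameters. *)

(** * Elementary real analysis *)

Lemma continuous_ptws (R : realType) (T : topologicalType) (I : Type)
    (g : T -> {ptws I -> R}) :
  (forall i, continuous (fun t => g t i)) -> continuous g.
Proof.
move=> gi_cont x; apply/cvg_sup => i A /=.
rewrite (@nbhsE (initial_topology (fun f : I -> R => f i))).
move=> [B [[C oC <-] Cx] BA].
apply: (filterS (fun t (Ht : C (g t i)) => BA (g t) Ht)).
by apply: (gi_cont i x); exact: open_nbhs_nbhs.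
Qed.

Lemma continuous_affine (R : realType) (a b : R) : continuous (fun t : R => a + t * b).
Proof. by move=> x; apply: cvgD; [exact: cvg_cst|apply: cvgM; [exact: cvg_id|exact: cvg_cst]]. Qed.

Lemma near0_gt0 (R : realType) (f : R -> R) :
  continuous f -> 0 < f 0 -> \forall t \near 0, 0 < f t.
Proof. by move=> f_cont f0; exact: (@cvgr_gt _ _ _ _ f (f 0) (f_cont 0) 0 f0). Qed.

Lemma near0_neq0 (R : realType) (f : R -> R) :
  continuous f -> f 0 != 0 -> \forall t \near 0, f t != 0.
Proof. by move=> f_cont f0; exact: (@cvgr_neq0 _ _ _ _ _ f (f 0) (f_cont 0) f0). Qed.

Lemma exists_ub (R : realDomainType) (T : finType) (f : T -> R) :
  exists2 c, 2 <= c & forall x, f x <= c.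
Proof.
exists (2 + \sum_x `|f x|); first by rewrite lerDl sumr_ge0.
move=> x; rewrite (bigD1 x) //= addrCA; apply: le_trans (ler_norm (f x)) _.
by rewrite lerDl addr_ge0 // sumr_ge0.
Qed.

Lemma exists_lb (R : realFieldType) (T : finType) (f : T -> R) : (forall x, 0 < f x) ->
  exists m, [/\ 0 < m, m <= 1 & forall x, m <= f x].
Proof.
move=> f_gt0; pose S := \sum_x (f x)^-1.
have S_ge0 : 0 <= S by apply: sumr_ge0 => x _; rewrite invr_ge0 ltW.
have S1_gt0 : 0 < 1 + S by lra.
exists (1 + S)^-1; split; first by rewrite invr_gt0.
  by rewrite invr_le1 // ?unitfE ?lt0r_neq0 //; lra.
move=> x; rewrite -[f x]invrK lef_pV2 ?posrE ?invr_gt0 //.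
have : (f x)^-1 <= S.
  by rewrite /S (bigD1 x) //= lerDl; apply: sumr_ge0 => y _; rewrite invr_ge0 ltW.
lra.
Qed.

(** * Paths and connected components *)

Section PathsOfComponents.
Variables (R : realType) (T : topologicalType) (g : R -> T).
Hypothesis g_cont : continuous g.

Lemma closure_from_left (C : set T) a s :
  a < s -> (forall t, a <= t < s -> C (g t)) -> closure C (g s).
Proof.
move=> las gC B /g_cont /nbhs_ballP [e /= e0 He].
pose t := Num.max a (s - e / 2).
have ht : a <= t < s by rewrite le_max lexx gt_max las /=; lra.
exists (g t); split; first exact: gC.
apply: He; rewrite -ball_normE /ball_ /= ger0_norm; last by rewrite subr_ge0 ltW //; case/andP: ht.
have : s - e / 2 <= t by rewrite le_max lexx orbT.
lra.
Qed.

Lemma closure_from_right (C : set T) s b :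
  s < b -> (forall t, s < t <= b -> C (g t)) -> closure C (g s).
Proof.
move=> lsb gC B /g_cont /nbhs_ballP [e /= e0 He].
pose t := Num.min b (s + e / 2).
have ht : s < t <= b by rewrite lt_min lsb ge_min lexx /=; lra.
exists (g t); split; first exact: gC.
apply: He; rewrite -ball_normE /ball_ /= distrC ger0_norm; last by rewrite subr_ge0 ltW //; case/andP: ht.
have : t <= s + e / 2 by rewrite ge_min lexx orbT.
lra.
Qed.

Variable Z : set T.
Local Notation cc := (connected_component Z).

Lemma connected_component_itv (i : interval R) a b : a \in i -> b \in i ->
  (forall t, t \in i -> Z (g t)) -> cc (g a) = cc (g b).
Proof.
move=> ai bi iZ.
have i_conn : connected (g @` [set` i]).
  apply: connected_continuous_connected; first exact/connected_intervalP/interval_is_interval.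
  exact: continuous_subspaceT.
have : g @` [set` i] `<=` cc (g a).
  by apply: connected_component_max => // y [t ti <-]; exact: iZ.
by move=> /(_ (g b)) gb; apply: same_connected_component; exact/gb/imageP.
Qed.

Lemma closure_component_from_left a s : a < s ->
  (forall t, a <= t < s -> Z (g t)) -> closure (cc (g a)) (g s).
Proof.
move=> las aZ; apply: (closure_from_left las) => t ht.
rewrite (@connected_component_itv `[a, s[ a t).
- exact/connected_component_refl/aZ.
- by rewrite in_itv /= lexx las.
- by rewrite in_itv.
- by move=> u; rewrite in_itv; exact: aZ.
Qed.

Lemma closure_component_from_right s b : s < b ->
  (forall t, s < t <= b -> Z (g t)) -> closure (cc (g b)) (g s).
Proof.
move=> lsb bZ; apply: (closure_from_right lsb) => t ht.
rewrite (@connected_component_itv `]s, b] b t).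
- exact/connected_component_refl/bZ.
- by rewrite in_itv /= lexx lsb.
- by rewrite in_itv.
- by move=> u; rewrite in_itv; exact: bZ.
Qed.

End PathsOfComponents.

Lemma exists_seq_min (R : realDomainType) (s : seq R) : s != [::] ->
  exists2 m, m \in s & forall x, x \in s -> m <= x.
Proof.
elim: s => // x s IH _.
have [->|/IH [m ms sm]] := eqVneq s [::].
  by exists x; rewrite ?inE // => y; rewrite inE => /eqP ->.
have [xm|mx] := leP x m.
  exists x; first by rewrite inE eqxx.
  by move=> y; rewrite inE => /orP [/eqP ->//|/sm]; exact: le_trans.
exists m; first by rewrite inE ms orbT.
by move=> y; rewrite inE => /orP [/eqP ->|/sm //]; exact: ltW.
Qed.

Lemma exists_gap_above (R : realFieldType) (B : seq R) s b : s < b ->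
  exists2 s', s < s' <= b & forall t, s < t <= s' -> t \notin B.
Proof.
move=> sb; elim: B => [|x B [s' /andP [ss' s'b] gap]]; first by exists b; rewrite ?sb ?lexx.
have [sx|xs] := ltP s x.
  exists (Num.min s' ((s + x) / 2)).
    by rewrite lt_min ss' ge_min s'b /=; lra.
  move=> t /andP [st]; rewrite le_min => /andP [ts' tx].
  rewrite inE negb_or gap ?st ?ts' // andbT; apply/eqP => etx.
  by move: tx; rewrite etx; lra.
exists s'; first by rewrite ss' s'b.
move=> t /andP [st ts']; rewrite inE negb_or gap ?st ?ts' // andbT.
by apply/eqP => etx; move: st; rewrite etx; lra.
Qed.

Lemma sub_count_lt (T : eqType) (P Q : pred T) (s : seq T) y :
  subpred P Q -> y \in s -> Q y -> ~~ P y -> (count P s < count Q s)%N.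
Proof.
move=> PQ; elim: s => // x s IH; rewrite inE => /orP [/eqP <- Qy nPy|ys Qy nPy].
  by rewrite /= Qy (negbTE nPy) add0n add1n ltnS; apply: sub_count.
rewrite /=; have := IH ys Qy nPy; case: (boolP (P x)) => Px.
  by rewrite (PQ _ Px) /= add1n ltnS.
by rewrite add0n => h; apply: leq_trans h _; apply: leq_addl.
Qed.

Section ChainAlongPath.
Variables (R : realType) (T : topologicalType) (g : R -> T).
Hypothesis g_cont : continuous g.
Variables (Z W : set T) (adj : set T -> set T -> Prop).
Local Notation cc := (connected_component Z).
Hypothesis adj_closure : forall a b z, Z a -> Z b -> W z ->
  closure (cc a) z -> closure (cc b) z -> adj (cc a) (cc b).

Lemma regular_interval_component a b : a <= b ->
  (forall t, a <= t <= b -> Z (g t)) -> cc (g a) = cc (g b).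
Proof.
move=> ab abZ; apply: (@connected_component_itv _ _ _ g_cont _ `[a, b]).
- by rewrite in_itv /= lexx ab.
- by rewrite in_itv /= lexx ab.
- by move=> t; rewrite in_itv; exact: abZ.
Qed.

Lemma adj_chain_along_path (B : seq R) a b : a <= b -> Z (g a) -> Z (g b) ->
  (forall t, a <= t <= b -> Z (g t) \/ (t \in B /\ W (g t))) ->
  clos_refl_trans _ adj (cc (g a)) (cc (g b)).
Proof.
move=> ab Za Zb abZW.
have [n cnt] : exists n, (count (fun x => ((a < x) && (x <= b))%R) B < n)%N.
  by exists (count (fun x => (a < x) && (x <= b)) B).+1.
(* Induction on the number of points of [B] in [(a, b]]: cross the first bad one, at [s]. *)
elim: n a ab Za abZW cnt => // n IH a ab Za abZW cnt.
pose S := [seq x <- B | (a < x) && (x <= b) && `[< ~ Z (g x) >]].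
have Z_notin_S t : a <= t <= b -> t \notin S -> Z (g t).
  move=> /andP [at_ tb] tS; have [->//|ta] := eqVneq t a.
  case: (abZW t); rewrite ?at_ ?tb // => -[tB _]; apply: contrapT => nZ.
  by move: tS; rewrite mem_filter tB lt_neqAle eq_sym ta at_ tb /= andbT => /negP; apply; apply/asboolP.
have [S0|/exists_seq_min [s sS minS]] := eqVneq S [::].
  rewrite (@regular_interval_component a b) //; first exact: rt_refl.
  by move=> t tab; apply: Z_notin_S; rewrite ?S0.
move: (sS); rewrite mem_filter => /andP [/andP [/andP [as_ sb] /asboolP nZs] sB].
have sb' : s < b.
  rewrite lt_neqAle sb andbT; by apply/eqP => esb; apply: nZs; rewrite esb.
have Ws : W (g s) by case: (abZW s) => [|//|[]//]; rewrite (ltW as_) sb.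
have [s' /andP [ss' s'b] gap] := exists_gap_above B sb'.
have Z_after t : s < t <= s' -> Z (g t).
  move=> /[dup] /gap tB /andP [st ts'].
  case: (abZW t) => [|//|[]]; last by rewrite (negbTE tB).
  by rewrite (le_trans (ltW as_) (ltW st)) (le_trans ts').
have Z_before t : a <= t < s -> Z (g t).
  move=> /andP [at_ ts]; apply: Z_notin_S; first by rewrite at_ (le_trans (ltW ts) sb).
  by apply: contraL ts => /minS; rewrite leNgt.
apply: rt_trans (rt_step _ _ _ _ (adj_closure Za (Z_after s' _) Ws _ _)) _.
- by rewrite ss' lexx.
- exact: closure_component_from_left.
- exact: closure_component_from_right.
apply: (IH s') => //.
- by apply: Z_after; rewrite ss' lexx.
- by move=> t /andP [s't tb]; apply: abZW; rewrite tb (le_trans (ltW (lt_trans as_ ss')) s't).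
rewrite -ltnS; apply: leq_trans cnt; apply: (@sub_count_lt _ _ _ B s) => //.
- by move=> x /andP [s'x xb]; rewrite xb andbT (lt_trans as_ (lt_trans ss' s'x)).
- by rewrite as_ sb.
- by rewrite negb_and -leNgt (ltW ss').
Qed.

End ChainAlongPath.

(** * AND/OR polynomials *)

Lemma in1_cat (T : eqType) (P : T -> Prop) (s1 s2 : seq T) :
  {in s1 ++ s2, forall x, P x} -> {in s1, forall x, P x} /\ {in s2, forall x, P x}.
Proof. by move=> Ps; split=> x xs; apply: Ps; rewrite mem_cat xs ?orbT. Qed.

Lemma eq_meval (R : pzRingType) n (v v' : 'I_n -> R) (ex : lexpr n) :
  {in leaves ex, v =1 v'} -> meval v ex = meval v' ex.
Proof.
elim: ex => [j|a IHa b IHb|a IHa b IHb] /=; first by apply; rewrite inE.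
  by move=> /in1_cat [va vb]; rewrite IHa ?IHb.
by move=> /in1_cat [va vb]; rewrite IHa ?IHb.
Qed.

Lemma continuous_meval (R : numFieldType) (T : topologicalType) n (v : T -> 'I_n -> R) ex :
  (forall j, continuous (fun t => v t j)) -> continuous (fun t => meval (v t) ex).
Proof.
move=> vj_cont; elim: ex => [j|a IHa b IHb|a IHa b IHb] /= x; first exact: vj_cont.
  exact: (continuousM (IHa x) (IHb x)).
exact: (continuousD (IHa x) (IHb x)).
Qed.

(* The partial derivative of [meval v ex] with respect to the variable [k]. *)
Fixpoint dmeval (R : pzRingType) n (v : 'I_n -> R) (k : 'I_n) (ex : lexpr n) : R :=
  match ex with
  | LVar j => (j == k)%:R
  | LAnd a b => dmeval v k a * meval v b + meval v a * dmeval v k b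
  | LOr a b => dmeval v k a + dmeval v k b
  end.

Lemma dmeval_notin (R : pzRingType) n (v : 'I_n -> R) k ex :
  k \notin leaves ex -> dmeval v k ex = 0.
Proof.
elim: ex => [j|a IHa b IHb|a IHa b IHb] /=; first by rewrite inE eq_sym => /negbTE ->.
  by rewrite mem_cat negb_or => /andP [/IHa -> /IHb ->]; rewrite mul0r mulr0 addr0.
by rewrite mem_cat negb_or => /andP [/IHa -> /IHb ->]; rewrite addr0.
Qed.

Lemma meval_shift (R : comPzRingType) n (v : 'I_n -> R) k (t : R) ex : uniq (leaves ex) ->
  meval (fun j => if j == k then v j + t else v j) ex = meval v ex + t * dmeval v k ex.
Proof.
elim: ex => [j|a IHa b IHb|a IHa b IHb] /=; first by case: (j == k); rewrite ?mulr1 ?mulr0 ?addr0.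
  rewrite cat_uniq => /and3P [ua nab ub]; rewrite IHa // IHb //.
  have [ka|ka] := boolP (k \in leaves a); last by rewrite (dmeval_notin v ka); ring.
  have kb : k \notin leaves b by apply: contra nab => kb; apply/hasP; exists k.
  by rewrite (dmeval_notin v kb); ring.
by rewrite cat_uniq => /and3P [ua _ ub]; rewrite IHa // IHb //; ring.
Qed.

Section MevalPositive.
Variables (R : numDomainType) (n : nat) (v : 'I_n -> R).

Lemma meval_gt0 ex : {in leaves ex, forall j, 0 < v j} -> 0 < meval v ex.
Proof.
elim: ex => [j|a IHa b IHb|a IHa b IHb] /=; first by apply; rewrite inE.
  by move=> /in1_cat [va vb]; rewrite mulr_gt0 ?IHa ?IHb.
by move=> /in1_cat [va vb]; rewrite addr_gt0 ?IHa ?IHb.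
Qed.

Lemma meval_ge_expn (m : R) ex : 0 < m -> m <= 1 ->
  {in leaves ex, forall j, m <= v j} -> m ^+ size (leaves ex) <= meval v ex.
Proof.
move=> m0 m1; have mX_ge0 k : 0 <= m ^+ k by rewrite exprn_ge0 ?ltW.
elim: ex => [j|a IHa b IHb|a IHa b IHb] /=; first by rewrite expr1; apply; rewrite inE.
  by move=> /in1_cat [/IHa ha /IHb hb]; rewrite size_cat exprD ler_pM.
move=> /in1_cat [/IHa ha /IHb hb]; rewrite size_cat exprD; apply: le_trans (ler_piMr _ _) _ => //.
  exact: exprn_ile1 (ltW m0) m1.
by apply: le_trans ha _; rewrite lerDl (le_trans _ hb).
Qed.

Lemma dmeval_ge0 k ex : {in leaves ex, forall j, 0 < v j} -> 0 <= dmeval v k ex.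
Proof.
elim: ex => [j|a IHa b IHb|a IHa b IHb] /=; first by rewrite ler0n.
  move=> /in1_cat [va vb].
  by rewrite addr_ge0 // mulr_ge0 ?IHa ?IHb // ltW // meval_gt0.
by move=> /in1_cat [va vb]; rewrite addr_ge0 ?IHa ?IHb.
Qed.

Lemma dmeval_gt0 k ex : k \in leaves ex -> {in leaves ex, forall j, 0 < v j} ->
  0 < dmeval v k ex.
Proof.
elim: ex => [j|a IHa b IHb|a IHa b IHb] /=.
- by rewrite inE => /eqP -> _; rewrite eqxx ltr01.
- rewrite mem_cat => /orP [ka|kb] /in1_cat [va vb].
    by rewrite ltr_pwDl ?mulr_ge0 ?mulr_gt0 ?IHa ?dmeval_ge0 ?meval_gt0 // ltW ?meval_gt0.
  by rewrite ltr_wpDl ?mulr_ge0 ?mulr_gt0 ?IHb ?dmeval_ge0 ?meval_gt0 // ltW ?meval_gt0.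
- rewrite mem_cat => /orP [ka|kb] /in1_cat [va vb].
    by rewrite ltr_pwDl ?IHa ?dmeval_ge0.
  by rewrite ltr_wpDl ?IHb ?dmeval_ge0.
Qed.

End MevalPositive.

(** * Regular parameters *)

Section Network.
Variables (R : realType) (N : nat) (sgn : 'I_N -> 'I_N -> option bool)
  (M : 'I_N -> option (lexpr N)).
Hypothesis wf : wf_network sgn M.
Local Notation param := {ptws pidx sgn -> R}.
Local Notation edge := (edge sgn).
Local Notation edge_of := (edge_of sgn).
Local Notation is_edge := (is_edge sgn).
Local Notation ffb := {ffun 'I_N -> bool}.
Local Notation eq_holds := Defs.eq_holds.
Implicit Types (z w : param) (e f : edge) (p q : ffb).

Lemma wf_leaves i t : M i = Some t ->
  uniq (leaves t) /\ forall j, (j \in leaves t) = is_edge j i.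
Proof.
move=> Mi; have := wf.2 i; rewrite Mi => leaves_perm.
split; first by rewrite (perm_uniq leaves_perm) enum_uniq.
by move=> j; rewrite (perm_mem leaves_perm) mem_enum inE.
Qed.

Lemma wf_no_logic i j : M i = None -> ~~ is_edge j i.
Proof.
move=> Mi; have := wf.2 i; rewrite Mi => src0.
apply/negP => ji; have : j \in src_set sgn i by rewrite inE.
by rewrite src0 inE.
Qed.

Lemma edge_of_None j i : ~~ is_edge j i -> edge_of j i = None.
Proof. by move=> ji; rewrite /edge_of insubN. Qed.

Lemma edge_of_Some j i : is_edge j i ->
  exists e, [/\ edge_of j i = Some e, esrc e = j & etgt e = i].
Proof. by move=> ji; rewrite /edge_of insubT /=; eexists. Qed.

Lemma edge_of_ends j i e : edge_of j i = Some e -> esrc e = j /\ etgt e = i.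
Proof. by rewrite /edge_of; case: insubP => // u _ hu [<-]; rewrite /esrc /etgt hu. Qed.

Lemma edge_inj e f : esrc e = esrc f -> etgt e = etgt f -> e = f.
Proof.
rewrite /esrc /etgt => ef1 ef2; apply: val_inj.
by move: ef1 ef2; case: (val e) => a b; case: (val f) => a' b' /= -> ->.
Qed.

Lemma etgt_lt_neq e f : (etgt e < etgt f)%N -> e <> f.
Proof. by move=> ef E; move: ef; rewrite E ltnn. Qed.

Definition face_pattern z e p : Prop :=
  exists x, [/\ cellpt z x, face z e x & pattern z (esrc e) x = p].

Definition positive_param z : Prop :=
  (forall e, [/\ 0 < pl z e, pl z e < pu z e & 0 < pth z e]) /\ (forall i, 0 < pg z i).

Definition distinct_thresholds z : Prop :=
  forall e f, esrc e = esrc f -> e <> f -> pth z e <> pth z f.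

Definition face_regular z : Prop :=
  forall e p, face_pattern z e p -> Lambda_p M z (esrc e) p <> pg z (esrc e) * pth z e.

Lemma ZregP z : Zreg M z <-> [/\ positive_param z, distinct_thresholds z & face_regular z].
Proof.
split.
- move=> [lut [g_gt0 [dz fz]]]; split => //.
  + by split=> // e; have [? [? ?]] := lut e; split.
  + by move=> e p [x [cx fx <-]]; exact: fz.
- move=> [[lut g_gt0] dz fz]; split; first by move=> e; have [] := lut e.
  by do 2!split=> //; move=> e x cx fx; apply: fz; exists x.
Qed.

Lemma positive_Zbar z : positive_param z -> Zbar z.
Proof.
move=> [lut g_gt0]; split => [e|i]; last exact/ltW.
by have [l0 lu th0] := lut e; rewrite !ltW //; exact: lt_trans lu.
Qed.

Definition sigma_vals z i p : 'I_N -> R :=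
  fun k => if edge_of k i is Some e then sig_val z e (p k) else 0.

Lemma Lambda_pE z i p :
  Lambda_p M z i p = if M i is Some t then meval (sigma_vals z i p) t else 0.
Proof. by []. Qed.

Lemma Lambda_p_no_logic z i p : M i = None -> Lambda_p M z i p = 0.
Proof. by rewrite Lambda_pE => ->. Qed.

Lemma face_pattern_nonedge z e p k : face_pattern z e p -> ~~ is_edge k (esrc e) -> p k = false.
Proof. by move=> [x [_ _ <-]] ke; rewrite /pattern ffunE edge_of_None. Qed.

Lemma face_pattern_thresholds z w e p :
  (forall f, pth z f = pth w f) -> face_pattern z e p -> face_pattern w e p.
Proof.
move=> zw; have E : pth z = pth w by apply/funext.
by rewrite /face_pattern /cellpt /face /pattern E.
Qed.

Lemma Lambda_p_lu z w i p : (forall f, pl z f = pl w f) -> (forall f, pu z f = pu w f) ->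
  Lambda_p M z i p = Lambda_p M w i p.
Proof.
move=> lzw uzw; have El : pl z = pl w by apply/funext.
have Eu : pu z = pu w by apply/funext.
by rewrite /Lambda_p /sig_val El Eu.
Qed.

Lemma sigma_vals_ge z i p t m : M i = Some t -> positive_param z -> (forall e, m <= pl z e) ->
  {in leaves t, forall j, m <= sigma_vals z i p j /\ 0 < sigma_vals z i p j}.
Proof.
move=> Mi [lut _] m_le j; have [_ ->] := wf_leaves Mi => /edge_of_Some [e [Ee _ _]].
have [l0 lu _] := lut e; rewrite /sigma_vals Ee /sig_val.
case: ifP => _; split => //.
- exact: le_trans (m_le e) (ltW lu).
- exact: lt_trans lu.
Qed.

Lemma Lambda_p_ge_expn z i p t m : M i = Some t -> positive_param z -> 0 < m -> m <= 1 ->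
  (forall e, m <= pl z e) -> m ^+ N <= Lambda_p M z i p.
Proof.
move=> Mi zpos m0 m1 m_le; rewrite Lambda_pE Mi.
apply: (@le_trans _ _ (m ^+ size (leaves t))); last first.
  by apply: meval_ge_expn => // j /(sigma_vals_ge p Mi zpos m_le) [].
apply: (ler_wiXn2l (ltW m0) m1); have [t_uniq _] := wf_leaves Mi.
rewrite -[X in (_ <= X)%N]size_enum_ord uniq_leq_size // => ? _; exact: mem_enum.
Qed.

Lemma eq_holds_positive z a : positive_param z -> eq_holds M z a ->
  (exists e f, [/\ a = EqThTh e f, esrc e = esrc f, (etgt e < etgt f)%N & pth z e = pth z f])
  \/ (exists e p, [/\ a = EqFace e p, face_pattern z e p &
                     pg z (esrc e) * pth z e = Lambda_p M z (esrc e) p]).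
Proof.
move=> [lut g_gt0]; case: a => /=.
- by move=> e E; have [_ + _] := lut e; rewrite E ltxx.
- by move=> e E; have [+ _ _] := lut e; rewrite E ltxx.
- by move=> e E; have [l0 lu _] := lut e; move: (lt_trans l0 lu); rewrite E ltxx.
- by move=> e E; have [_ _] := lut e; rewrite E ltxx.
- by move=> i E; have := g_gt0 i; rewrite E ltxx.
- by move=> e f [? [? ?]]; left; exists e, f.
- by move=> e p [[x [? [? ?]]] ?]; right; exists e, p; split=> //; exists x.
Qed.

(** * Segments in parameter space *)

Definition comp z := connected_component (Zreg M) z.
Definition reach z w := clos_refl_trans _ (gpg_adj M) (comp z) (comp w).
Definition seg z w (t : R) : param := fun c => z c + t * (w c - z c).

Lemma seg0 z w : seg z w 0 = z.
Proof. by apply/funext => c; rewrite /seg mul0r addr0. Qed.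

Lemma seg1 z w : seg z w 1 = w.
Proof. by apply/funext => c; rewrite /seg mul1r addrC subrK. Qed.

Lemma seg_const z w t c : w c = z c -> seg z w t c = z c.
Proof. by rewrite /seg => ->; rewrite subrr mulr0 addr0. Qed.

Lemma seg_seg z w s t : seg z (seg z w t) s = seg z w (s * t).
Proof. by apply/funext => c; rewrite /seg; ring. Qed.

Definition setc z (c0 : pidx sgn) (v : R) : param := fun c => if c == c0 then v else z c.

Lemma seg_setc z c0 v t : seg z (setc z c0 v) t = setc z c0 (z c0 + t * (v - z c0)).
Proof.
apply/funext => c; rewrite /seg /setc.
by case: eqP => [->|_]; rewrite ?subrr ?mulr0 ?addr0.
Qed.

Lemma continuous_seg z w : continuous (seg z w).
Proof. by apply: continuous_ptws => c; exact: continuous_affine. Qed.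

Lemma continuous_Lambda_seg z w i p : continuous (fun t => Lambda_p M (seg z w t) i p).
Proof.
rewrite /Lambda_p; case: (M i) => [ex|]; last exact: cst_continuous.
apply: continuous_meval => j; case: (edge_of j i) => [f|]; last exact: cst_continuous.
by rewrite /sig_val; case: (p j == is_act f); exact: continuous_affine.
Qed.

Lemma gpg_adj_closure a b z : Zreg M a -> Zreg M b -> one_deficient M z ->
  closure (comp a) z -> closure (comp b) z -> gpg_adj M (comp a) (comp b).
Proof.
move=> Za Zb zW ca cb; split; first by exists a.
split; first by exists b.
by exists z; have [zZ _] := zW.
Qed.

Lemma reach_seg z w (B : seq R) : Zreg M z -> Zreg M w ->
  (forall t, 0 <= t <= 1 ->
    Zreg M (seg z w t) \/ (t \in B /\ one_deficient M (seg z w t))) ->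
  reach z w.
Proof.
move=> Zz Zw segZW; rewrite /reach -[in comp z](seg0 z w) -[in comp w](seg1 z w).
apply: (adj_chain_along_path (@continuous_seg z w) gpg_adj_closure ler01); rewrite ?seg0 ?seg1 //.
exact: segZW.
Qed.

Lemma reach_seg_regular z w : (forall t, 0 <= t <= 1 -> Zreg M (seg z w t)) -> reach z w.
Proof.
move=> segZ; apply: (@reach_seg z w [::]) => [||t /segZ]; last by left.
- by rewrite -(seg0 z w); apply: segZ; rewrite lexx ler01.
- by rewrite -(seg1 z w); apply: segZ; rewrite lexx ler01.
Qed.

Lemma reach_seg_near z w (P : param -> Prop) :
  (\forall t \near 0, Zreg M (seg z w t) /\ P (seg z w t)) ->
  exists t, [/\ 0 < t, reach z (seg z w t), Zreg M (seg z w t) & P (seg z w t)].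
Proof.
move=> /nbhs_ballP [d /= d0 dZP].
have near_ball t : `|t| < d -> Zreg M (seg z w t) /\ P (seg z w t).
  by move=> td; apply: dZP; rewrite -ball_normE /ball_ /= sub0r normrN.
have d2_gt0 : 0 < d / 2 by rewrite divr_gt0.
have [Zt Pt] : Zreg M (seg z w (d / 2)) /\ P (seg z w (d / 2)).
  by apply: near_ball; rewrite gtr0_norm //; lra.
exists (d / 2); split => //; apply: reach_seg_regular => s /andP [s0 s1].
rewrite seg_seg; apply: (proj1 (near_ball _ _)); rewrite normrM ger0_norm // gtr0_norm //; nra.
Qed.

Definition same_th_gamma z w : Prop :=
  (forall f, pth w f = pth z f) /\ (forall i, pg w i = pg z i).

Lemma same_th_gamma_seg z w t : same_th_gamma z w -> same_th_gamma z (seg z w t).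
Proof. by move=> [thzw gzw]; split=> [f|i]; apply: seg_const; [exact: thzw|exact: gzw]. Qed.

Lemma near_positive_seg z w : positive_param z -> same_th_gamma z w ->
  \forall t \near 0, positive_param (seg z w t).
Proof.
move=> [lut g_gt0] zw.
have l_near e : \forall t \near 0, 0 < pl (seg z w t) e.
  by apply: near0_gt0; [exact: continuous_affine|rewrite seg0; have [] := lut e].
have lu_near e : \forall t \near 0, 0 < pu (seg z w t) e - pl (seg z w t) e.
  have := @continuous_affine _ (pu z e - pl z e) ((pu w e - pu z e) - (pl w e - pl z e)).
  move=> /near0_gt0; rewrite mul0r addr0 subr_gt0; have [_ lu _] := lut e.
  move=> /(_ lu); apply: filterS => t.
  suff -> : pu (seg z w t) e - pl (seg z w t) e =
    (pu z e - pl z e) + t * ((pu w e - pu z e) - (pl w e - pl z e)) by [].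
  by rewrite /pu /pl /seg; ring.
near=> t.
have l_pos : forall e, 0 < pl (seg z w t) e by near: t; exact: filter_forall.
have lu_pos : forall e, 0 < pu (seg z w t) e - pl (seg z w t) e.
  by near: t; exact: filter_forall.
have [thzt gzt] := same_th_gamma_seg t zw; split=> [e|i]; last by rewrite gzt.
split; [exact: l_pos|by rewrite -subr_gt0|by rewrite thzt; have [] := lut e].
Unshelve. all: by end_near.
Qed.

Lemma near_face_regular_seg z w : face_regular z -> same_th_gamma z w ->
  \forall t \near 0, face_regular (seg z w t).
Proof.
move=> zreg zw.
have face_near (ep : edge * ffb) : \forall t \near 0, face_pattern z ep.1 ep.2 ->
    Lambda_p M (seg z w t) (esrc ep.1) ep.2 - pg z (esrc ep.1) * pth z ep.1 != 0.
  case: ep => e p /=; have [ep_face|] := pselect (face_pattern z e p); last first.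
    by move=> nface; apply: filterE => t /nface.
  have f_cont : continuous (fun t => Lambda_p M (seg z w t) (esrc e) p - pg z (esrc e) * pth z e).
    move=> x; exact: (continuousB (@continuous_Lambda_seg z w (esrc e) p x) (@cst_continuous _ _ (pg z (esrc e) * pth z e) x)).
  have f0 : Lambda_p M (seg z w 0) (esrc e) p - pg z (esrc e) * pth z e != 0.
    by rewrite seg0 subr_eq0; apply/eqP; exact: zreg.
  by apply: filterS (near0_neq0 f_cont f0) => t tne0 _.
near=> t.
have face_all : forall ep : edge * ffb, face_pattern z ep.1 ep.2 ->
    Lambda_p M (seg z w t) (esrc ep.1) ep.2 - pg z (esrc ep.1) * pth z ep.1 != 0.
  by near: t; exact: filter_forall.
have [thzt gzt] := same_th_gamma_seg t zw.
move=> e p /(face_pattern_thresholds thzt) ep_face; rewrite gzt thzt; apply/eqP.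
by rewrite -subr_eq0; exact: (face_all (e, p)).
Unshelve. all: by end_near.
Qed.

Lemma near_Zreg_seg z w : Zreg M z -> same_th_gamma z w ->
  \forall t \near 0, Zreg M (seg z w t).
Proof.
move=> /ZregP [zpos zdist zreg] zw.
near=> t; have [thzt _] := same_th_gamma_seg t zw; apply/ZregP; split.
- by near: t; exact: near_positive_seg.
- by move=> e f ef nef; rewrite !thzt; exact: zdist.
- by near: t; exact: near_face_regular_seg.
Unshelve. all: by end_near.
Qed.

(** * Generic parameters *)

Definition generic_at z (c : edge * edge * ffb * ffb) : Prop :=
  let: (e, f, p, q) := c in
  esrc e = esrc f -> (exists k, is_edge k (esrc e) /\ p k != q k) ->
  Lambda_p M z (esrc e) p * pth z f != Lambda_p M z (esrc e) q * pth z e.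

(* Genericity makes the face equalities met while a single gamma_i moves occur one at a
   time: two of them at the same value of gamma_i would give the excluded relation. *)
Definition generic z : Prop := forall c, generic_at z c.

Lemma near_generic_at_seg z w c : (forall f, pth w f = pth z f) -> generic_at z c ->
  \forall t \near 0, generic_at (seg z w t) c.
Proof.
case: c => [[[e f] p] q] thzw /=.
have [ef|nef] := pselect (esrc e = esrc f); last by move=> _; apply: filterE => t /nef.
have [pq|npq] := pselect (exists k, is_edge k (esrc e) /\ p k != q k); last first.
  by move=> _; apply: filterE => t _ /npq.
move=> /(_ ef pq) Lpq; have thzt t g : pth (seg z w t) g = pth z g by apply: seg_const; exact: thzw.
have cont := @continuous_Lambda_seg z w (esrc e).
have : continuous (fun t => Lambda_p M (seg z w t) (esrc e) p * pth z f -
                            Lambda_p M (seg z w t) (esrc e) q * pth z e).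
  move=> x; exact: (continuousB (continuousM (cont p x) (@cst_continuous _ _ (pth z f) x))
                                (continuousM (cont q x) (@cst_continuous _ _ (pth z e) x))).
move=> /near0_neq0; rewrite seg0 subr_eq0 => /(_ Lpq); apply: filterS => t.
by rewrite /= subr_eq0 !thzt => Lt _ _.
Qed.

Lemma near_Zreg_generic_seg z w : Zreg M z -> same_th_gamma z w ->
  \forall s \near 0, Zreg M (seg z w s) /\
                   forall c, generic_at z c -> generic_at (seg z w s) c.
Proof.
move=> Zz zw; have Z_near := near_Zreg_seg Zz zw.
have gen_near : \forall s \near 0, forall c, generic_at z c -> generic_at (seg z w s) c.
  apply: (@filter_forall _ _ _ _ (nbhs_filter (0 : R))) => c.
  have [zc|nzc] := pselect (generic_at z c); last by apply: filterE => s /nzc.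
  by apply: filterS (near_generic_at_seg zw.1 zc) => s gs _.
exact: (filterS2 (nbhs_filter (0 : R)) (fun s Zs gs => conj Zs gs) Z_near gen_near).
Qed.

Definition bump z c : param := setc z c (z c + 1).

Definition lu_idx f (b : bool) : pidx sgn := inr (f, if b then 1%R else 0%R).

Lemma inr_eqE f f' (k k' : 'I_3) :
  (inr (f, k) == inr (f', k') :> pidx sgn) = (f == f') && (k == k').
Proof. by []. Qed.

Lemma same_th_gamma_bump z f b : same_th_gamma z (bump z (lu_idx f b)).
Proof. by split=> [f'|i] //; rewrite /pth /bump /setc /lu_idx inr_eqE; case: b; rewrite andbF. Qed.

Lemma sig_val_bump z f b f' bb : sig_val (bump z (lu_idx f b)) f' bb =
  sig_val z f' bb + ((f' == f) && ((bb == is_act f') == b))%:R.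
Proof.
rewrite /sig_val /pu /pl /bump /setc /lu_idx !inr_eqE.
have [->|nf'] := eqVneq f' f; last by rewrite /= ?addr0.
by case: b; case: (bb == is_act f); rewrite /= ?addr0.
Qed.

Lemma Lambda_p_seg_bump z i k f b q t s : M i = Some t -> edge_of k i = Some f ->
  Lambda_p M (seg z (bump z (lu_idx f b)) s) i q =
  Lambda_p M z i q + s * ((q k == is_act f) == b)%:R * dmeval (sigma_vals z i q) k t.
Proof.
move=> Mi Ef; have [uniq_t _] := wf_leaves Mi; have [fk fi] := edge_of_ends Ef.
rewrite !Lambda_pE Mi -meval_shift //; apply: eq_meval => j _.
rewrite /sigma_vals; case Ej: (edge_of j i) => [f'|]; last first.
  by case: eqP Ej => [->|//]; rewrite Ef.
have [f'j f'i] := edge_of_ends Ej.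
have sig_seg : sig_val (seg z (bump z (lu_idx f b)) s) f' (q j) =
    sig_val z f' (q j) + s * ((f' == f) && ((q j == is_act f') == b))%:R.
  rewrite [LHS](_ : _ = sig_val z f' (q j) + s * (sig_val (bump z (lu_idx f b)) f' (q j) -
                                                 sig_val z f' (q j))).
    by rewrite sig_val_bump addrAC subrr add0r.
  by rewrite /sig_val; case: ifP.
rewrite sig_seg; have [jk|njk] := eqVneq j k.
  have -> : f' = f by apply: edge_inj; rewrite ?f'j ?fk ?f'i ?fi.
  by rewrite eqxx jk.
have -> : (f' == f) = false by apply/eqP => ff'; move: njk; rewrite -f'j -fk ff' eqxx.
by rewrite mulr0 addr0.
Qed.

Lemma reach_generic_at z c : Zreg M z -> exists w,
  [/\ Zreg M w, reach z w, generic_at w c,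
      (forall c', generic_at z c' -> generic_at w c') & same_th_gamma z w].
Proof.
move=> Zz; have [zc|] := pselect (generic_at z c).
  by exists z; split => //; exact: rt_refl.
case: c => [[[e e'] p] q] /= nzc.
have ee' : esrc e = esrc e' by apply: contrapT => nee'; apply: nzc => /nee'.
have [k [ki pqk]] : exists k, is_edge k (esrc e) /\ p k != q k.
  by apply: contrapT => npq; apply: nzc => _ /npq.
have Lpq : Lambda_p M z (esrc e) p * pth z e' = Lambda_p M z (esrc e) q * pth z e.
  by apply/eqP; apply: contrapT => nL; apply: nzc => _ _; exact/negP.
have [f [Ef _ _]] := edge_of_Some ki.
case Mi: (M (esrc e)) => [t|]; last by move: ki; rewrite (negbTE (wf_no_logic _ Mi)).
have [zpos _ _] := (ZregP z).1 Zz.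
(* Only [Lambda_i(p)] moves, which breaks the relation. *)
pose w := bump z (lu_idx f (p k == is_act f)).
pose D := dmeval (sigma_vals z (esrc e) p) k t.
have D_gt0 : 0 < D.
  apply: dmeval_gt0; first by have [_ ->] := wf_leaves Mi.
  have l_ge0 g : 0 <= pl z g by have [/ltW] := zpos.1 g.
  by move=> j /(sigma_vals_ge p Mi zpos l_ge0) [].
have near_w := near_Zreg_generic_seg Zz (same_th_gamma_bump z f (p k == is_act f)).
have [s [s_gt0 zs Zs gs]] :=
  reach_seg_near (P := fun y => forall c', generic_at z c' -> generic_at y c') near_w.
exists (seg z w s); split => //; last exact: same_th_gamma_seg (same_th_gamma_bump z f _).
have [ths _] := same_th_gamma_seg s (same_th_gamma_bump z f (p k == is_act f)).
move=> _ _; rewrite !(@Lambda_p_seg_bump z (esrc e) k f _ _ t s Mi Ef) !ths eqxx mulr1.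
have -> : (q k == is_act f) == (p k == is_act f) = false.
  by move: pqk; case: (p k); case: (q k); case: (is_act f).
rewrite mulr0 mul0r addr0 mulrDl Lpq -subr_eq0 addrAC subrr add0r.
by rewrite !mulf_neq0 ?gt_eqF //; have [_ _] := zpos.1 e'.
Qed.

Lemma reach_generic z : Zreg M z ->
  exists w, [/\ Zreg M w, reach z w, generic w & same_th_gamma z w].
Proof.
move=> Zz.
suff [w [Zw zw wcs zws]] : exists w, [/\ Zreg M w, reach z w,
    {in enum {: edge * edge * ffb * ffb}, forall c, generic_at w c} & same_th_gamma z w].
  by exists w; split => // c; apply: wcs; rewrite mem_enum.
elim: (enum _) => [|c cs [w1 [Z1 zw1 w1cs [th1 g1]]]].
  by exists z; split => //; exact: rt_refl.
have [w [Zw w1w wc w1_w [th g]]] := reach_generic_at c Z1.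
exists w; split => //; first exact: rt_trans zw1 w1w.
  by move=> c'; rewrite inE => /orP [/eqP ->//|/w1cs]; exact: w1_w.
by split=> [f|i]; rewrite ?th ?th1 ?g ?g1.
Qed.

(** * Lowering the decay rates *)

Local Notation setg z i v := (setc z (inl i) v).

Lemma setg_g z i v j : pg (setg z i v) j = if j == i then v else pg z j.
Proof. by []. Qed.

Lemma Lambda_p_setg z i v j p : Lambda_p M (setg z i v) j p = Lambda_p M z j p.
Proof. exact: Lambda_p_lu. Qed.

Lemma face_pattern_setg z i v e p : face_pattern (setg z i v) e p <-> face_pattern z e p.
Proof. by split; apply: face_pattern_thresholds. Qed.

Lemma generic_setg z i v : generic z -> generic (setg z i v).
Proof. by move=> zgen [[[e f] p] q]; have := zgen (e, f, p, q); rewrite /= !Lambda_p_setg. Qed.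

Lemma seg_setg z i v t : seg z (setg z i v) t = setg z i (pg z i + t * (v - pg z i)).
Proof. exact: seg_setc. Qed.

Lemma setg_Zreg z i v : Zreg M z -> 0 < v ->
  (forall e p, esrc e = i -> face_pattern z e p -> Lambda_p M z i p <> v * pth z e) ->
  Zreg M (setg z i v).
Proof.
move=> /ZregP [[lut g_gt0] zdist zreg] v_gt0 v_face; apply/ZregP; split => //.
- by split=> // j; rewrite setg_g; case: eqP.
- move=> e p /face_pattern_setg ep_face; rewrite Lambda_p_setg setg_g.
  by case: eqP => [ei|_]; [rewrite ei; apply: v_face|exact: zreg].
Qed.

Lemma setg_one_deficient z i v e p : Zreg M z -> generic z -> 0 < v -> esrc e = i ->
  face_pattern z e p -> Lambda_p M z i p = v * pth z e -> one_deficient M (setg z i v).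
Proof.
move=> Zz zgen v_gt0 ei ep_face Lv.
have [[lut g_gt0] zdist zreg] := (ZregP z).1 Zz.
have vpos : positive_param (setg z i v) by split=> // j; rewrite setg_g; case: eqP.
split; first exact: positive_Zbar.
exists (EqFace e p); split.
  split; first by have [x [? ? ?]] := (face_pattern_setg z i v e p).2 ep_face; exists x.
  by rewrite setg_g ei eqxx Lambda_p_setg Lv.
move=> b /(eq_holds_positive vpos) [[f [f' [-> ff' /etgt_lt_neq nff' thff']]]|].
  by case: (zdist f f' ff' nff' thff').
move=> [f [q [-> /face_pattern_setg fq_face]]]; rewrite setg_g Lambda_p_setg.
have [fi Lq|nfi Lq] := eqVneq (esrc f) i; last by case: (zreg f q fq_face); rewrite -Lq.
have {}Lq : Lambda_p M z i q = v * pth z f by rewrite -fi -Lq.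
have pq : p = q.
  apply/ffunP => k; have [ki|nki] := boolP (is_edge k i); last first.
    by rewrite (face_pattern_nonedge ep_face) ?(face_pattern_nonedge fq_face) ?ei ?fi.
  apply: contrapT => /eqP pqk; have := zgen (e, f, p, q); rewrite /= ei fi Lv Lq.
  by move=> /(_ erefl (ex_intro _ k (conj ki pqk))); rewrite mulrAC eqxx.
move: Lq; rewrite -pq Lv => /(mulfI (lt0r_neq0 v_gt0)) thef.
by have [->|nef] := pselect (f = e); last by case: (zdist f e _ nef); rewrite ?fi ?ei.
Qed.

Lemma reach_setg z i v : Zreg M z -> generic z -> 0 < v ->
  (forall e p, esrc e = i -> face_pattern z e p -> Lambda_p M z i p <> v * pth z e) ->
  reach z (setg z i v).
Proof.
move=> Zz zgen v_gt0 v_face; have [[_ g_gt0] _ zreg] := (ZregP z).1 Zz.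
pose g0 := pg z i; pose B := [seq (Lambda_p M z i ep.2 / pth z ep.1 - g0) / (v - g0)
                               | ep <- enum {: edge * ffb}].
apply: (@reach_seg _ _ B Zz (setg_Zreg Zz v_gt0 v_face)) => t /andP [t0 t1].
have gt_gt0 : 0 < g0 + t * (v - g0).
  rewrite (_ : g0 + _ = (1 - t) * g0 + t * v); last by ring.
  have [->|t_neq0] := eqVneq t 0; first by rewrite subr0 mul1r mul0r addr0; exact: g_gt0.
  apply: ltr_wpDl; first by apply: mulr_ge0; [rewrite subr_ge0|exact/ltW/g_gt0].
  by rewrite mulr_gt0 // lt0r t_neq0.
rewrite seg_setg.
have [[[e p] /= [ei ep_face Lt]]|no_face] := pselect (exists ep : edge * ffb,
    [/\ esrc ep.1 = i, face_pattern z ep.1 ep.2 &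
        Lambda_p M z i ep.2 = (g0 + t * (v - g0)) * pth z ep.1]); last first.
  left; apply: setg_Zreg => // e p ei ep_face Lt; apply: no_face; by exists (e, p).
right; split; last exact: setg_one_deficient Lt.
have vg0 : v - g0 != 0.
  by apply: contraTneq isT => vg0; case: (zreg e p ep_face); rewrite ei Lt vg0 mulr0 addr0.
have th_gt0 : 0 < pth z e by have [lut _] := (ZregP z).1 Zz; have [] := lut.1 e.
apply/mapP; exists (e, p); first by rewrite mem_enum.
by rewrite /= Lt; field; rewrite vg0 gt_eqF.
Qed.

Definition setgs z (s : seq 'I_N) (v : R) : param := foldr (fun i y => setg y i v) z s.

Lemma setgs_g z s v j : pg (setgs z s v) j = if j \in s then v else pg z j.
Proof. by elim: s => //= i s IH; rewrite setg_g inE IH; case: (j == i). Qed.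

Lemma setgs_eq z s v f : [/\ pl (setgs z s v) f = pl z f, pu (setgs z s v) f = pu z f
                          & pth (setgs z s v) f = pth z f].
Proof. by elim: s. Qed.

Lemma reach_setgs z s v : Zreg M z -> generic z -> 0 < v ->
  (forall e p, Lambda_p M z (esrc e) p <> v * pth z e) ->
  reach z (setgs z s v) /\ Zreg M (setgs z s v).
Proof.
move=> Zz zgen v_gt0 v_nface; elim: s => [|i s [zs Zs]] /=; first by split => //; exact: rt_refl.
have EL j p : Lambda_p M (setgs z s v) j p = Lambda_p M z j p.
  by apply: Lambda_p_lu => f; have [] := setgs_eq z s v f.
have Eth f : pth (setgs z s v) f = pth z f by have [] := setgs_eq z s v f.
have v_face e p : esrc e = i -> face_pattern (setgs z s v) e p ->
    Lambda_p M (setgs z s v) i p <> v * pth (setgs z s v) e.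
  by move=> <- _; rewrite EL Eth.
have gen_s : generic (setgs z s v).
  by elim: (s) => //= j s' gs'; exact: generic_setg.
split; last exact: setg_Zreg.
exact: rt_trans zs (reach_setg Zs gen_s v_gt0 v_face).
Qed.

(** * The low-gamma regime *)

Definition low_gamma (m Th eps : R) z : Prop :=
  [/\ positive_param z, forall e, m <= pl z e, forall e, pth z e <= Th & forall i, pg z i <= eps].

Section LowGamma.
Variables (m Th eps : R).
Hypotheses (m_gt0 : 0 < m) (m_le1 : m <= 1) (eps_Th : eps * Th < m ^+ N).

(* Every [Lambda] is at least [m ^+ N], while every [gamma * theta] is below [eps * Th]. *)
Lemma low_gamma_no_face z e p : low_gamma m Th eps z ->
  pg z (esrc e) * pth z e <> Lambda_p M z (esrc e) p.
Proof.
move=> [zpos l_ge th_le g_le]; have [_ _ th_gt0] := zpos.1 e; have g_gt0 := zpos.2 (esrc e).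
case Me: (M (esrc e)) => [t|]; last first.
  by rewrite Lambda_p_no_logic // => /eqP; rewrite mulf_eq0 !gt_eqF.
move=> gL; have := Lambda_p_ge_expn p Me zpos m_gt0 m_le1 l_ge.
rewrite -gL; apply/negP; rewrite -ltNge; apply: le_lt_trans eps_Th.
by apply: ler_pM; [exact: ltW|exact: ltW|exact: g_le|exact: th_le].
Qed.

Lemma low_gamma_Zreg z : low_gamma m Th eps z -> distinct_thresholds z -> Zreg M z.
Proof.
move=> zlow zdist; have [zpos _ _ _] := zlow.
by apply/ZregP; split=> // e p _ /esym; exact: low_gamma_no_face.
Qed.

End LowGamma.

Definition mkp (g : 'I_N -> R) (l u th : edge -> R) : param :=
  fun c => match c with
  | inl i => g i
  | inr (f, k) => if val k == 0%N then l f else if val k == 1%N then u f else th f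
  end.

Lemma mkp_g g l u th i : pg (mkp g l u th) i = g i. Proof. by []. Qed.
Lemma mkp_l g l u th f : pl (mkp g l u th) f = l f. Proof. by []. Qed.
Lemma mkp_u g l u th f : pu (mkp g l u th) f = u f. Proof. by []. Qed.
Lemma mkp_th g l u th f : pth (mkp g l u th) f = th f. Proof. by []. Qed.

Lemma seg_l z w t f : pl (seg z w t) f = pl z f + t * (pl w f - pl z f). Proof. by []. Qed.
Lemma seg_u z w t f : pu (seg z w t) f = pu z f + t * (pu w f - pu z f). Proof. by []. Qed.
Lemma seg_th z w t f : pth (seg z w t) f = pth z f + t * (pth w f - pth z f). Proof. by []. Qed.
Lemma seg_g z w t i : pg (seg z w t) i = pg z i + t * (pg w i - pg z i). Proof. by []. Qed.

Local Notation setth z f v := (setc z (inr (f, 2%R)) v).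

Lemma setth_th z f v f' : pth (setth z f v) f' = if f' == f then v else pth z f'.
Proof. by rewrite /pth /setc inr_eqE eqxx andbT. Qed.

Lemma setth_l z f v f' : pl (setth z f v) f' = pl z f'.
Proof. by rewrite /pl /setc inr_eqE; case: (f' == f). Qed.

Lemma setth_u z f v f' : pu (setth z f v) f' = pu z f'.
Proof. by rewrite /pu /setc inr_eqE; case: (f' == f). Qed.

Lemma setth_g z f v i : pg (setth z f v) i = pg z i.
Proof. by []. Qed.

Lemma seg_setth z f v t : seg z (setth z f v) t = setth z f (pth z f + t * (v - pth z f)).
Proof. exact: seg_setc. Qed.

(* The thresholds are finally spread out in [[1, 2)] according to the target node. *)
Definition tg f : R := 1 + (val (etgt f))%:R / (N%:R + 1).

Lemma tg_bounds f : 1 <= tg f < 2.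
Proof.
have N1_gt0 : 0 < N%:R + 1 :> R by rewrite ltr_wpDl // ler0n.
rewrite /tg lerDl divr_ge0 ?ler0n ?ltW //= -[X in _ < X]/(1 + 1) ltrD2l.
by rewrite ltr_pdivrMr // mul1r natr1 ltr_nat ltnS ltnW.
Qed.

Lemma tg_inj f f' : esrc f = esrc f' -> tg f = tg f' -> f = f'.
Proof.
move=> ff'; rewrite /tg => /addrI.
have N1_neq0 : N%:R + 1 != 0 :> R by rewrite gt_eqF // ltr_wpDl // ler0n.
move=> /(mulIf (invr_neq0 N1_neq0)) /eqP; rewrite eqr_nat => /eqP tff'.
by apply: edge_inj => //; apply: val_inj.
Qed.

Definition zstar : param := mkp (fun _ => 1 / 4) (fun _ => 1) (fun _ => 2) tg.

Lemma reach_zstar_final z : positive_param z -> (forall f, pl z f = 1) -> (forall f, pu z f = 2) ->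
  (forall f, pth z f = tg f) -> (forall i, pg z i <= 1 / 4) -> reach z zstar.
Proof.
move=> [_ g_gt0] l1 u2 thtg g_le; apply: reach_seg_regular => t /andP [t0 t1].
have Eth f : pth (seg z zstar t) f = tg f by rewrite seg_th mkp_th thtg subrr mulr0 addr0.
have El f : pl (seg z zstar t) f = 1 by rewrite seg_l mkp_l l1 subrr mulr0 addr0.
have Eu f : pu (seg z zstar t) f = 2 by rewrite seg_u mkp_u u2 subrr mulr0 addr0.
have Eg i : 0 < pg (seg z zstar t) i <= 1 / 4.
  rewrite seg_g mkp_g; have := g_gt0 i; have := g_le i.
  by move: (pg z i) => g g_le4 g_gt0'; apply/andP; split; nra.
apply: (@low_gamma_Zreg 1 2 (1 / 4)); rewrite ?expr1n; try lra.
- split.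
  + split=> [f|i]; last by have /andP [] := Eg i.
    by rewrite El Eu Eth; have /andP [tg1 tg2] := tg_bounds f; split; lra.
  + by move=> f; rewrite El.
  + by move=> f; rewrite Eth; have /andP [_ /ltW] := tg_bounds f.
  + by move=> i; have /andP [] := Eg i.
- by move=> f f' ff' nff'; rewrite !Eth => /(tg_inj ff').
Qed.

Section Tame.
Variables (m Th eps : R).
Hypotheses (m_gt0 : 0 < m) (m_le1 : m <= 1) (eps_Th : eps * Th < m ^+ N) (Th_ge2 : 2 <= Th).

Definition tame z := low_gamma m Th eps z /\ distinct_thresholds z.

Lemma tame_Zreg z : tame z -> Zreg M z.
Proof. by move=> [zlow zdist]; apply: (low_gamma_Zreg m_gt0 m_le1 eps_Th). Qed.

Lemma reach_tame z w : (forall t, 0 <= t <= 1 -> tame (seg z w t)) -> reach z w.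
Proof. by move=> segT; apply: reach_seg_regular => t /segT /tame_Zreg. Qed.

Definition scale z := mkp (pg z) (pl z) (pu z) (fun f => pth z f / (2 * Th)).

Lemma reach_scale z : tame z ->
  [/\ reach z (scale z), tame (scale z) & forall f, pth (scale z) f < 1].
Proof.
move=> [[[lut g_gt0] l_ge th_le g_le] zdist]; have Th2 := Th_ge2.
have Th2_gt0 : 0 < 2 * Th by lra.
have seg_tame t : 0 <= t <= 1 -> tame (seg z (scale z) t).
  move=> /andP [t0 t1]; pose c := 1 - t + t / (2 * Th).
  have r_gt0 : 0 < (2 * Th)^-1 by rewrite invr_gt0.
  have r_lt1 : (2 * Th)^-1 < 1 by rewrite invf_lt1 //; lra.
  have c_gt0 : 0 < c by rewrite /c; nra.
  have c_le1 : c <= 1 by rewrite /c; nra.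
  have Eth f : pth (seg z (scale z) t) f = pth z f * c by rewrite seg_th mkp_th /c; field; lra.
  have El f : pl (seg z (scale z) t) f = pl z f by rewrite seg_l mkp_l subrr mulr0 addr0.
  have Eu f : pu (seg z (scale z) t) f = pu z f by rewrite seg_u mkp_u subrr mulr0 addr0.
  have Eg i : pg (seg z (scale z) t) i = pg z i by rewrite seg_g mkp_g subrr mulr0 addr0.
  split; last by move=> f f' ff' nff'; rewrite !Eth => /(mulIf (lt0r_neq0 c_gt0)); exact: zdist.
  split.
  - split=> [f|i]; last by rewrite Eg.
    by rewrite El Eu Eth; have [? ? ?] := lut f; split=> //; rewrite mulr_gt0.
  - by move=> f; rewrite El.
  - by move=> f; rewrite Eth (le_trans _ (th_le f)) // ler_piMr // ltW //; have [] := lut f.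
  - by move=> i; rewrite Eg.
have tame1 := seg_tame 1; rewrite seg1 lexx ler01 in tame1.
split; [exact: reach_tame|exact: tame1|] => f.
by rewrite mkp_th ltr_pdivrMr // mul1r (le_lt_trans (th_le f)) //; lra.
Qed.

Definition lam z := mkp (pg z) (fun _ => 1) (fun _ => 2) (pth z).

Lemma reach_lam z : tame z -> reach z (lam z) /\ tame (lam z).
Proof.
move=> [[[lut g_gt0] l_ge th_le g_le] zdist].
have seg_tame t : 0 <= t <= 1 -> tame (seg z (lam z) t).
  move=> /andP [t0 t1].
  have Eth f : pth (seg z (lam z) t) f = pth z f by rewrite seg_th mkp_th subrr mulr0 addr0.
  have Eg i : pg (seg z (lam z) t) i = pg z i by rewrite seg_g mkp_g subrr mulr0 addr0.
  have El f : m <= pl (seg z (lam z) t) f.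
    rewrite seg_l mkp_l; have := l_ge f; have := m_le1; move: (pl z f) => l; nra.
  split; last by move=> f f' ff' nff'; rewrite !Eth; exact: zdist.
  split.
  - split=> [f|i]; last by rewrite Eg.
    rewrite Eth; have [l0 lu th0] := lut f; split=> //; first exact: lt_le_trans (El f).
    rewrite seg_l seg_u mkp_l mkp_u; move: (pl z f) (pu z f) lu => a b ab.
    have [->|t_neq0] := eqVneq t 0; first by rewrite !mul0r !addr0.
    have : 0 < t by rewrite lt0r t_neq0.
    nra.
  - exact: El.
  - by move=> f; rewrite Eth.
  - by move=> i; rewrite Eg.
have tame1 := seg_tame 1; rewrite seg1 lexx ler01 in tame1.
by split; [exact: reach_tame|exact: tame1].
Qed.

Lemma setth_low_gamma z f v : low_gamma m Th eps z -> 0 < v <= Th ->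
  low_gamma m Th eps (setth z f v).
Proof.
move=> [[lut g_gt0] l_ge th_le g_le] /andP [v_gt0 v_le]; split.
- split=> [f'|i]; last by rewrite setth_g.
  by rewrite setth_l setth_u setth_th; have [? ? ?] := lut f'; case: eqP.
- by move=> f'; rewrite setth_l.
- by move=> f'; rewrite setth_th; case: eqP.
- by move=> i; rewrite setth_g.
Qed.

Lemma setth_distinct z f v : distinct_thresholds z ->
  (forall f', esrc f' = esrc f -> f' <> f -> pth z f' <> v) ->
  distinct_thresholds (setth z f v).
Proof.
move=> zdist v_new g g' gg' ngg'; rewrite !setth_th.
case: eqP => [gf|ngf]; case: eqP => [g'f|ng'f]; first by case: ngg'; rewrite gf g'f.
- by move=> E; apply: (v_new g' _ ng'f (esym E)); rewrite -gf gg'.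
- by apply: (v_new g _ ngf); rewrite -g'f.
- exact: zdist.
Qed.

Lemma setth_one_deficient z f f' v : tame z -> 0 < v <= Th -> esrc f' = esrc f -> f' <> f ->
  pth z f' = v -> one_deficient M (setth z f v).
Proof.
move=> [zlow zdist] v_bnd f'f nf'f thf'.
have ylow := setth_low_gamma f zlow v_bnd; have [ypos _ _ _] := ylow.
have ythf' : pth (setth z f v) f' = v by rewrite setth_th (introF eqP nf'f).
have ythf : pth (setth z f v) f = v by rewrite setth_th eqxx.
have tff' : etgt f != etgt f' by apply/eqP => /(edge_inj (esym f'f)) /esym.
have other h : esrc h = esrc f -> h <> f -> pth (setth z f v) h = v -> h = f'.
  move=> hf nhf; rewrite setth_th (introF eqP nhf) => thh.
  by apply: contrapT => nhf'; apply: (zdist h f'); rewrite ?hf ?f'f // thh.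
pose L := if (etgt f < etgt f')%N then EqThTh f f' else EqThTh f' f.
split; first exact: positive_Zbar.
exists L; split.
  rewrite /L; case: ltnP => [ff'|f'f_le] /=; first by rewrite f'f ythf ythf'.
  by rewrite f'f ythf ythf' ltn_neqAle eq_sym tff'.
move=> b /(eq_holds_positive ypos) [[g [g' [-> gg' ltgg' thgg']]]|]; last first.
  by move=> [g [q [_ _ gL]]]; case: (low_gamma_no_face m_gt0 m_le1 eps_Th ylow gL).
have ngg' := etgt_lt_neq ltgg'.
have [gf|ngf] := eqVneq g f.
  have g'f' : g' = f' by apply: other; rewrite -?gg' -?thgg' ?gf // => g'f; case: ngg'; rewrite gf.
  by rewrite /L -gf -g'f' ltgg'.
have [g'f|ng'f] := eqVneq g' f.
  have gf' : g = f' by apply: other; rewrite ?gg' ?thgg' ?g'f //; exact/eqP.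
  by rewrite /L -g'f -gf' ltnNge (ltnW ltgg').
case: (zdist g g' gg' ngg'); move: thgg'.
by rewrite !setth_th (negbTE ngf) (negbTE ng'f).
Qed.

Lemma reach_setth z f v : tame z -> 0 < v <= Th ->
  (forall f', esrc f' = esrc f -> f' <> f -> pth z f' <> v) ->
  reach z (setth z f v) /\ tame (setth z f v).
Proof.
move=> zt v_bnd v_new; have [zlow zdist] := zt.
have yt : tame (setth z f v) by split; [exact: setth_low_gamma|exact: setth_distinct].
split => //.
pose B := [seq (pth z f' - pth z f) / (v - pth z f) | f' <- enum {: edge}].
apply: (@reach_seg _ _ B (tame_Zreg zt) (tame_Zreg yt)) => t /andP [t0 t1].
rewrite seg_setth.
have vt_bnd : 0 < pth z f + t * (v - pth z f) <= Th.
  have [[lut _] _ th_le _] := zlow; have [_ _ thf_gt0] := lut f; have := th_le f.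
  by move: v_bnd => /andP [? ?] ?; apply/andP; split; nra.
have [[f' [f'f nf'f thf']]|no_hit] := pselect (exists f',
    [/\ esrc f' = esrc f, f' <> f & pth z f' = pth z f + t * (v - pth z f)]).
  right; split; last exact: setth_one_deficient thf'.
  have v_thf : v - pth z f != 0.
    by apply/eqP => vthf; apply: (zdist f' f f'f nf'f); rewrite thf' vthf mulr0 addr0.
  by apply/mapP; exists f'; [rewrite mem_enum|rewrite thf'; field].
left; apply: tame_Zreg; split; first exact: setth_low_gamma.
by apply: setth_distinct => // f' f'f nf'f thf'; apply: no_hit; exists f'.
Qed.

Definition setths z (s : seq edge) : param := foldr (fun f y => setth y f (tg f)) z s.

Lemma setths_th z s f : pth (setths z s) f = if f \in s then tg f else pth z f.
Proof. by elim: s => //= g s IH; rewrite setth_th inE IH; case: eqP => [->|]. Qed.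

(* After [reach_scale] all thresholds are below 1, so the targets [tg f >= 1] are never hit
   by a threshold that has not been moved yet. *)
Lemma reach_setths z s : tame z -> (forall f, pth z f < 1) ->
  reach z (setths z s) /\ tame (setths z s).
Proof.
move=> zt th_lt1; elim: s => [|f s [zy yt]] /=; first by split=> //; exact: rt_refl.
have Th2 := Th_ge2; have /andP [tg1 tg2] := tg_bounds f.
have v_bnd : 0 < tg f <= Th by apply/andP; split; lra.
have v_new f' : esrc f' = esrc f -> f' <> f -> pth (setths z s) f' <> tg f.
  move=> f'f nf'f; rewrite setths_th; case: ifP => _; first by move=> /(tg_inj f'f).
  by have := th_lt1 f'; lra.
have [yy' y't] := reach_setth yt v_bnd v_new.
by split=> //; exact: rt_trans zy yy'.
Qed.

Lemma reach_zstar_tame z : eps <= 1 / 4 -> tame z -> reach z zstar.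
Proof.
move=> eps_le zt.
have [z_z3 z3t th_lt1] := reach_scale zt.
have [z3_y yt] := reach_setths (enum {: edge}) z3t th_lt1.
have [y_y' [[y'pos _ _ g_le] _]] := reach_lam yt.
apply: rt_trans z_z3 _; apply: rt_trans z3_y _; apply: rt_trans y_y' _.
apply: reach_zstar_final => // [f|i]; first by rewrite mkp_th setths_th mem_enum.
exact: le_trans (g_le i) eps_le.
Qed.

End Tame.

Lemma reach_zstar z : Zreg M z -> reach z zstar.
Proof.
move=> Zz; have [w [Zw zw wgen _]] := reach_generic Zz.
have [[lut _] _ _] := (ZregP w).1 Zw.
have [m [m_gt0 m_le1 l_ge]] : exists m, [/\ 0 < m, m <= 1 & forall e, m <= pl w e].
  by apply: exists_lb => e; have [] := lut e.
have [Th Th_ge2 th_le] := exists_ub (pth w).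
have mN_gt0 : 0 < m ^+ N by exact: exprn_gt0.
have mN_le1 : m ^+ N <= 1 by exact: exprn_ile1 (ltW m_gt0) m_le1.
pose eps := m ^+ N / (2 * Th).
have eps_gt0 : 0 < eps by rewrite divr_gt0 //; lra.
have eps_Th : eps * Th < m ^+ N by rewrite /eps mulrAC ltr_pdivrMr ?ltr_pM2l //; lra.
have eps_le : eps <= 1 / 4 by rewrite /eps ler_pdivrMr; lra.
pose y := setgs w (enum 'I_N) eps.
have Ey f : [/\ pl y f = pl w f, pu y f = pu w f & pth y f = pth w f] by exact: setgs_eq.
have EL j p : Lambda_p M y j p = Lambda_p M w j p by apply: Lambda_p_lu => f; have [] := Ey f.
have Eg i : pg y i = eps by rewrite setgs_g mem_enum.
have ylow : low_gamma m Th eps y.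
  split=> [|e|e|i]; last by rewrite Eg.
  - split=> [e|i]; last by rewrite Eg.
    by have [-> -> ->] := Ey e.
  - by have [-> _ _] := Ey e.
  - by have [_ _ ->] := Ey e.
have v_nface e p : Lambda_p M w (esrc e) p <> eps * pth w e.
  have [_ _ <-] := Ey e; rewrite -EL -(Eg (esrc e)) => /esym.
  exact: low_gamma_no_face ylow.
have [wy Zy] := reach_setgs (enum 'I_N) Zw wgen eps_gt0 v_nface.
have [_ ydist _] := (ZregP y).1 Zy.
apply: rt_trans zw _; apply: rt_trans wy _.
exact: (reach_zstar_tame m_gt0 m_le1 eps_Th Th_ge2 eps_le (conj ylow ydist)).
Qed.

Lemma gpg_adj_sym (C1 C2 : set param) : gpg_adj M C1 C2 -> gpg_adj M C2 C1.
Proof. by move=> [C1v [C2v [z [zC1 [zC2 zW]]]]]; split=> //; split=> //; exists z. Qed.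

End Network.

Lemma clos_refl_trans_sym (A : Type) (r : A -> A -> Prop) :
  (forall x y, r x y -> r y x) ->
  forall x y, clos_refl_trans _ r x y -> clos_refl_trans _ r y x.
Proof.
move=> r_sym x y; elim=> [{}x {}y /r_sym|{}x|{}x z {}y _ IHxz _ IHzy].
- exact: rt_step.
- exact: rt_refl.
- exact: rt_trans IHzy IHxz.
Qed.

Theorem proposition4p4 (R : realType) (N : nat)
  (sgn : 'I_N -> 'I_N -> option bool) (M : 'I_N -> option (lexpr N)) :
  wf_network sgn M -> gpg_connected R sgn M.
Proof.
move=> wf _ _ [z1 Z1 ->] [z2 Z2 ->].
exact: rt_trans (reach_zstar wf Z1) (clos_refl_trans_sym (@gpg_adj_sym R N sgn M) (reach_zstar wf Z2)).
Qed.
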